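(* Let $r,K,\mu$ satisfy Assumption 1. There exists a unique $(w,m)\in(0,1)\times(0,K)$ such that $f_w(w,m)=f_m(w,m)=0$.
   Context: Assumption 1: $r\in(1,\infty)$, $\mu\in\left(0,\min\left(\frac r2,1-\frac1r,1-K,K\right)\right)$, $K\in\left(0,\min\left(1,\frac{r}{r-1}\left(1-\frac{\mu}{1-\mu}\right)\right)\right)$. $f_w(w,m):=w(1-(w+m))+\mu(m-w)$, $f_m(w,m):=rm\left(1-\frac{w+m}{K}\right)+\mu(w-m)$. *)

From Stdlib Require Import Reals.
Open Scope R_scope.

(* Assumption 1 of the paper, with min(a,b,..) unfolded into conjunctions
   of strict upper bounds. *)
Definition assumption1 (r K mu : R) : Prop :=
  1 < r /\
  0 < mu /\ mu < r / 2 /\ mu < 1 - 1 / r /\ mu < 1 - K /\ mu < K /\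
  0 < K /\ K < 1 /\ K < r / (r - 1) * (1 - mu / (1 - mu)).

Definition f_w (mu w m : R) : R := w * (1 - (w + m)) + mu * (m - w).

Definition f_m (r K mu w m : R) : R :=
  r * m * (1 - (w + m) / K) + mu * (w - m).

From Stdlib Require Import Reals Lra Psatz.
Open Scope R_scope.

(* On the nullcline f_w = 0 one has m (w - mu) = w (1 - mu - w), which forces
   mu < w < 1 - mu and determines m as a function of w.  Substituting it into
   f_m = 0 and clearing denominators leaves a quadratic equation in w, whose
   values at w = mu and w = 1 - mu are -r mu (1 - 2 mu)^2 and K mu (1 - 2 mu)^2.
   This sign change gives exactly one root in (mu, 1 - mu).  Finally f_m < 0
   as soon as m >= K, so the corresponding m automatically lies below K. *)

Section Quadratic.

Variables (p : R -> R) (a b c x y : R).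
Hypothesis p_quadratic : forall t, p t = a * t * t + b * t + c.
Hypotheses (x_lt_y : x < y) (px_lt0 : p x < 0) (py_gt0 : 0 < p y).

Lemma quadratic_root_between : exists u, x < u < y /\ p u = 0.
Proof.
  assert (Hcont : continuity (fun t => a * t * t + b * t + c)) by reg.
  rewrite !p_quadratic in px_lt0, py_gt0.
  destruct (IVT _ x y Hcont x_lt_y px_lt0 py_gt0) as (u & [Hxu Huy] & Hu).
  exists u; rewrite p_quadratic.
  repeat split; auto.
  - destruct Hxu as [? | <-]; [assumption | lra].
  - destruct Huy as [? | ->]; [assumption | lra].
Qed.

(* If p had two distinct roots u, v in (x, y), then p t = a (t - u) (t - v)
   would have the sign of a at both x and y. *)
Lemma quadratic_root_between_unique u v :
  x < u < y -> x < v < y -> p u = 0 -> p v = 0 -> u = v.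
Proof.
  intros Hu Hv pu0 pv0.
  destruct (Req_dec u v) as [| Huv]; [assumption | exfalso].
  rewrite !p_quadratic in pu0, pv0, px_lt0, py_gt0.
  assert (Hsum : a * (u + v) + b = 0).
  { assert (Hprod : (u - v) * (a * (u + v) + b) = 0) by nra.
    destruct (Rmult_integral _ _ Hprod); lra. }
  assert (Hfact : forall t, a * t * t + b * t + c = a * ((t - u) * (t - v))) by
    (intro t; nra).
  rewrite Hfact in px_lt0, py_gt0.
  assert (0 < (x - u) * (x - v)) by nra.
  assert (0 < (y - u) * (y - v)) by nra.
  nra.
Qed.

End Quadratic.

Definition nullcline_m (mu w : R) : R := w * (1 - mu - w) / (w - mu).

Definition reduced_f_m (r K mu w : R) : R :=
  r * (1 - mu - w) * ((K - 1 + 2 * mu) * w - K * mu)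
  + K * mu * (w - mu) * (2 * w - 1).

Lemma reduced_f_m_quadratic r K mu : exists a b c,
  forall t, reduced_f_m r K mu t = a * t * t + b * t + c.
Proof.
  exists (- r * (K - 1 + 2 * mu) + 2 * K * mu),
    (r * (1 - mu) * (K - 1 + 2 * mu) + r * K * mu - K * mu - 2 * K * mu * mu),
    (- r * (1 - mu) * K * mu + K * mu * mu).
  intro t; unfold reduced_f_m; ring.
Qed.

Lemma reduced_f_m_at_mu r K mu :
  reduced_f_m r K mu mu = - (r * mu * (1 - 2 * mu) ^ 2).
Proof. unfold reduced_f_m; ring. Qed.

Lemma reduced_f_m_at_1_sub_mu r K mu :
  reduced_f_m r K mu (1 - mu) = K * mu * (1 - 2 * mu) ^ 2.
Proof. unfold reduced_f_m; ring. Qed.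

Lemma f_w_eq0 mu w m : f_w mu w m = 0 <-> m * (w - mu) = w * (1 - mu - w).
Proof. unfold f_w; split; intro; lra. Qed.

Lemma f_w_nullcline_m mu w : w <> mu -> f_w mu w (nullcline_m mu w) = 0.
Proof. intro; apply f_w_eq0; unfold nullcline_m; field; lra. Qed.

Lemma f_m_nullcline_m r K mu w : w <> mu -> K <> 0 ->
  K * (w - mu) ^ 2 * f_m r K mu w (nullcline_m mu w) = w * reduced_f_m r K mu w.
Proof.
  intros; unfold f_m, nullcline_m, reduced_f_m; field; split; lra.
Qed.

Lemma f_w_eq0_bounds mu w m : 0 < mu < 1 / 2 -> 0 < w -> 0 < m ->
  f_w mu w m = 0 -> mu < w < 1 - mu.
Proof.
  intros Hmu Hw Hm Hfw%f_w_eq0.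
  split.
  - destruct (Rlt_or_le mu w) as [| Hle]; [assumption | exfalso].
    assert (m * (w - mu) <= 0) by nra.
    assert (0 < w * (1 - mu - w)) by nra.
    lra.
  - destruct (Rlt_or_le w (1 - mu)) as [| Hle]; [assumption | exfalso].
    assert (0 < m * (w - mu)) by nra.
    assert (w * (1 - mu - w) <= 0) by nra.
    lra.
Qed.

Lemma f_w_eq0_nullcline_m mu w m : w <> mu ->
  f_w mu w m = 0 -> m = nullcline_m mu w.
Proof.
  intros Hw Hfw%f_w_eq0; unfold nullcline_m.
  apply (Rmult_eq_reg_r (w - mu)); [rewrite Hfw; field |]; lra.
Qed.

Lemma f_m_lt0_ge_K r K mu w m : 0 < K -> 0 < mu < r -> 0 < w -> K <= m ->
  f_m r K mu w m < 0.
Proof.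
  intros HK Hmu Hw Hm.
  assert (Hscaled : K * f_m r K mu w m = r * m * (K - w - m) + K * mu * (w - m))
    by (unfold f_m; field; lra).
  assert (0 <= r * m * (m - K)) by (apply Rmult_le_pos; nra).
  assert (0 <= r * w * (m - K)) by (apply Rmult_le_pos; nra).
  assert (0 <= K * mu * (m - K)) by (apply Rmult_le_pos; nra).
  assert (K * f_m r K mu w m <= K * w * (mu - r)) by nra.
  assert (0 < K * w * (r - mu)) by (apply Rmult_lt_0_compat; nra).
  nra.
Qed.

Lemma steady_state_reduced r K mu w m : 0 < mu < 1 / 2 -> 0 < K ->
  0 < w -> 0 < m -> f_w mu w m = 0 -> f_m r K mu w m = 0 ->
  mu < w < 1 - mu /\ reduced_f_m r K mu w = 0 /\ m = nullcline_m mu w.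
Proof.
  intros Hmu HK Hw Hm Hfw Hfm.
  pose proof (f_w_eq0_bounds mu w m Hmu Hw Hm Hfw) as Hbounds.
  pose proof (f_w_eq0_nullcline_m mu w m ltac:(lra) Hfw) as Hm_eq.
  pose proof (f_m_nullcline_m r K mu w ltac:(lra) ltac:(lra)) as Hid.
  rewrite <- Hm_eq, Hfm, Rmult_0_r in Hid.
  repeat split; try lra; try assumption.
  destruct (Rmult_integral _ _ (eq_sym Hid)); lra.
Qed.

Lemma reduced_steady_state r K mu w : 0 < mu -> 0 < K -> mu < w < 1 - mu ->
  reduced_f_m r K mu w = 0 ->
  0 < nullcline_m mu w /\ f_w mu w (nullcline_m mu w) = 0
  /\ f_m r K mu w (nullcline_m mu w) = 0.
Proof.
  intros Hmu HK Hw Hred.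
  pose proof (f_m_nullcline_m r K mu w ltac:(lra) ltac:(lra)) as Hid.
  rewrite Hred, Rmult_0_r in Hid.
  assert (0 < K * (w - mu) ^ 2) by (apply Rmult_lt_0_compat; [lra | apply pow_lt; lra]).
  repeat split.
  - unfold nullcline_m; apply Rdiv_lt_0_compat; nra.
  - apply f_w_nullcline_m; lra.
  - destruct (Rmult_integral _ _ Hid); lra.
Qed.

Theorem mainTheorem18 (r K mu : R) (H : assumption1 r K mu) :
  exists w m : R,
    (0 < w < 1 /\ 0 < m < K /\ f_w mu w m = 0 /\ f_m r K mu w m = 0) /\
    (forall w' m' : R,
       0 < w' < 1 -> 0 < m' < K -> f_w mu w' m' = 0 -> f_m r K mu w' m' = 0 ->
       w' = w /\ m' = m).
Proof.
  destruct H as (Hr & Hmu & _ & _ & HmuK1 & HmuK & HK & HK1 & _).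
  assert (Hmu2 : 0 < mu < 1 / 2) by lra.
  assert (Hlo : reduced_f_m r K mu mu < 0).
  { rewrite reduced_f_m_at_mu; apply Ropp_lt_gt_0_contravar.
    apply Rmult_lt_0_compat; [nra | apply pow_lt; lra]. }
  assert (Hhi : 0 < reduced_f_m r K mu (1 - mu)).
  { rewrite reduced_f_m_at_1_sub_mu.
    apply Rmult_lt_0_compat; [nra | apply pow_lt; lra]. }
  destruct (reduced_f_m_quadratic r K mu) as (a & b & c & Hquad).
  destruct (quadratic_root_between _ a b c mu (1 - mu) Hquad ltac:(lra) Hlo Hhi)
    as (w & Hw & Hred).
  destruct (reduced_steady_state r K mu w Hmu HK Hw Hred) as (Hm & Hfw & Hfm).
  exists w, (nullcline_m mu w); split.
  - assert (nullcline_m mu w < K).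
    { apply Rnot_le_lt; intro Hge.
      pose proof (f_m_lt0_ge_K r K mu w _ HK ltac:(lra) ltac:(lra) Hge); lra. }
    repeat split; assumption || lra.
  - intros w' m' Hw' Hm' Hfw' Hfm'.
    destruct (steady_state_reduced r K mu w' m' Hmu2 HK ltac:(lra) ltac:(lra) Hfw' Hfm')
      as (Hw'b & Hred' & ->).
    assert (w' = w) as ->
      by exact (quadratic_root_between_unique _ a b c mu (1 - mu) Hquad Hlo Hhi
                  w' w Hw'b Hw Hred' Hred).
    split; reflexivity.
Qed.
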